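(* Let $n\le l$ be positive integers, let $L_l=\{a_1<a_2<\dots<a_l\}$ be the linearly ordered semilattice of $l$ elements (with $a_ia_j=a_{\min(i,j)}$), and let $t(X)=s(X)$ be an equation over $L_l$ in the variables $X=\{x_1,\dots,x_n\}$ in which every variable $x_1,\dots,x_n$ occurs. Let $\sigma$ be a permutation of $\{1,\dots,n\}$ of the first or of the second kind with respect to this equation. Then the set $Y_\sigma\subseteq L_l^n$ is irreducible, and its coordinate semilattice satisfies $\Gamma(Y_\sigma)\cong L_n$ if $\sigma$ is of the first kind and $\Gamma(Y_\sigma)\cong L_{n-1}$ if $\sigma$ is of the second kind.
   Context: A term $t(X)$ is a commutative word in the letters $x_1,\dots,x_n$; $\mathrm{Var}(t)$ is the set of variables occurring in $t$. An equation is an ordered pair of terms written $t(X)=s(X)$; an inequality $t\le s$ abbreviates the equation $ts=t$. A point $P\in L_l^n$ is a solution of $t(X)=s(X)$ if $t(P)=s(P)$ in $L_l$. For a system $S$ of equations, $V(S)$ is the set of common solutions; a set $Y\subseteq L_l^n$ is algebraic if $Y=V(S)$ for some system $S$, and an algebraic set is irreducible if it is not a proper finite union of other algebraic sets. For an algebraic set $Y$, terms $t,s$ are $\sim_Y$-equivalent if $t(P)=s(P)$ for all $P\in Y$; the set of equivalence classes, with the induced multiplication, is the coordinate semilattice $\Gamma(Y)$. A permutation $\sigma$ of $\{1,\dots,n\}$ is of the first kind (for the equation $t=s$) if $x_{\sigma(1)}\in\mathrm{Var}(t)\cap\mathrm{Var}(s)$, and of the second kind if $x_{\sigma(1)}\in\mathrm{Var}(s)\setminus\mathrm{Var}(t)$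 and $x_{\sigma(2)}\in\mathrm{Var}(t)\setminus\mathrm{Var}(s)$. If $\sigma$ is of the first kind, $Y_\sigma=V(\{x_{\sigma(i)}\le x_{\sigma(i+1)}: 1\le i\le n-1\})$; if $\sigma$ is of the second kind, $Y_\sigma=V(\{x_{\sigma(1)}=x_{\sigma(2)}\}\cup\{x_{\sigma(i)}\le x_{\sigma(i+1)}: 2\le i\le n-1\})$. *)

From mathcomp Require Import all_boot all_order perm.
Set Implicit Arguments. Unset Strict Implicit. Unset Printing Implicit Defensive.

Section Semilattice.
Variables (n l : nat).

(* L_l = {a_1 < ... < a_l} is modelled by 'I_l (a_i <-> i-1), product = min. *)
Definition point := {ffun 'I_n -> 'I_l}.

(* A term = a (nonempty) commutative word in x_1..x_n, i.e. an exponent vector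
   with at least one positive exponent. *)
Definition term := {f : {ffun 'I_n -> nat} | [exists i, 0 < f i]}.

Definition Var (t : term) : {set 'I_n} := [set i | 0 < sval t i].

(* value of t at P in L_l (as the nat index of the element of 'I_l);
   Var t is nonempty so the default l is never attained. *)
Definition eval (t : term) (P : point) : nat :=
  \big[minn/l]_(i in Var t) (nat_of_ord (P i)).

Definition mul_fun (t s : term) : {ffun 'I_n -> nat} :=
  [ffun i => sval t i + sval s i].

Lemma mul_ok (t s : term) : [exists i, 0 < mul_fun t s i].
Proof.
have /existsP [i Hi] := valP t; apply/existsP; exists i.
by rewrite ffunE /=; exact: leq_trans Hi (leq_addr _ _).
Qed.

Definition mul (t s : term) : term := exist _ (mul_fun t s) (mul_ok t s).

Definition var_fun (i : 'I_n) : {ffun 'I_n -> nat} := [ffun j => nat_of_bool (j == i)].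

Lemma var_ok (i : 'I_n) : [exists j, 0 < var_fun i j].
Proof. by apply/existsP; exists i; rewrite ffunE eqxx. Qed.

Definition var (i : 'I_n) : term := exist _ (var_fun i) (var_ok i).

Definition equation := (term * term)%type.

(* inequality t <= s abbreviates the equation t s = t *)
Definition ineq (t s : term) : equation := (mul t s, t).

Definition solution (P : point) (e : equation) : Prop := eval e.1 P = eval e.2 P.

Definition pset := point -> Prop.

Definition V (S : equation -> Prop) : pset := fun P => forall e, S e -> solution P e.

Definition algebraic (Y : pset) : Prop := exists S, forall P, Y P <-> V S P.

Definition irreducible (Y : pset) : Prop :=
  algebraic Y /\
  forall (k : nat) (Z : 'I_k -> pset),
    (forall i, algebraic (Z i)) ->
    (forall P, Y P <-> exists i, Z i P) ->
    exists i, forall P, Y P <-> Z i P.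

Definition equivY (Y : pset) (t s : term) : Prop := forall P, Y P -> eval t P = eval s P.

(* Gamma(Y) is isomorphic to L_k: an explicit isomorphism from the set of
   ~_Y-classes (with induced multiplication) onto 'I_k with min. *)
Definition coord_iso_L (Y : pset) (k : nat) : Prop :=
  exists f : term -> 'I_k,
    (forall t s, f t = f s <-> equivY Y t s) /\
    (forall a : 'I_k, exists t, f t = a) /\
    (forall t s, nat_of_ord (f (mul t s)) = minn (f t) (f s)).

(* kinds of permutations (0-based: sigma(1) is sigma at index 0) *)
Definition first_kind (t s : term) (sg : {perm 'I_n}) : Prop :=
  exists i : 'I_n, nat_of_ord i = 0 /\ sg i \in Var t :&: Var s.

Definition second_kind (t s : term) (sg : {perm 'I_n}) : Prop :=
  exists i j : 'I_n, nat_of_ord i = 0 /\ nat_of_ord j = 1 /\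
    sg i \in Var s :\: Var t /\ sg j \in Var t :\: Var s.

Definition Y1 (sg : {perm 'I_n}) : pset :=
  V (fun e => exists i j : 'I_n, nat_of_ord j = (nat_of_ord i).+1 /\
                 e = ineq (var (sg i)) (var (sg j))).

Definition Y2 (sg : {perm 'I_n}) : pset :=
  V (fun e => (exists i j : 'I_n, nat_of_ord i = 0 /\ nat_of_ord j = 1 /\
                 e = (var (sg i), var (sg j))) \/
              (exists i j : 'I_n, 1 <= nat_of_ord i /\ nat_of_ord j = (nat_of_ord i).+1 /\
                 e = ineq (var (sg i)) (var (sg j)))).

End Semilattice.

From HB Require Import structures.
From Pilot Require Import Defs.
From mathcomp Require Import all_boot all_order perm.

Set Implicit Arguments.
Unset Strict Implicit.
Unset Printing Implicit Defensive.

(* Each Y_sigma has a generic point P0, a point of Y_sigma satisfying only the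
   equations that hold on all of Y_sigma: for the first kind
   P0 x_sigma(i) = a_i, for the second kind P0 x_sigma(1) = P0 x_sigma(2) = a_1
   and P0 x_sigma(i) = a_(i-1).  Indeed every point of Y_sigma is m o P0 for
   some m monotone on the values of P0, and the value of a term is a minimum,
   which monotone maps preserve.  A generic point makes Y_sigma irreducible
   (the member of a finite algebraic cover that contains P0 contains
   everything), and identifies Gamma(Y_sigma) with the values of terms at P0,
   which are exactly those of the variables: L_n, resp. L_(n-1).  Neither the
   equation t = s nor the kind of sigma matters beyond forcing n >= 2 in the
   second case. *)

HB.instance Definition _ := SemiGroup.isComLaw.Build nat minn minnA minnC.

Section Evaluation.
Variables n l : nat.
Implicit Types (t s : term n) (P : point n l).

Lemma eval_le t P j : j \in Var t -> eval t P <= P j.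
Proof. by move=> Vj; rewrite /eval (bigD1 j) //= geq_minl. Qed.

Lemma eval_attained t P : exists2 i, i \in Var t & eval t P = P i.
Proof.
have /existsP [i0 t_i0] := valP t.
have Vi0 : i0 \in Var t by rewrite inE.
case: (arg_minnP (fun i => P i : nat) Vi0) => i Vi minP.
exists i => //; apply/eqP; rewrite eqn_leq eval_le //=.
apply: (big_ind (fun x => P i <= x)) => // [|x y]; first exact: ltnW.
by rewrite leq_min => -> ->.
Qed.

Lemma eval_min t P i :
  i \in Var t -> (forall j, j \in Var t -> P i <= P j) -> eval t P = P i.
Proof.
move=> Vi minP; have [k Vk Ek] := eval_attained t P.
by apply/eqP; rewrite eqn_leq eval_le // Ek minP.
Qed.

Lemma Var_var (k : 'I_n) : Var (var k) = [set k].
Proof. by apply/setP => i; rewrite !inE ffunE; case: (i == k). Qed.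

Lemma eval_var (k : 'I_n) P : eval (var k) P = P k.
Proof. by apply: eval_min => [|j]; rewrite Var_var inE // => /eqP ->. Qed.

Lemma Var_mul t s : Var (Defs.mul t s) = Var t :|: Var s.
Proof. by apply/setP => i; rewrite !inE ffunE addn_gt0. Qed.

Lemma eval_mul t s P : eval (Defs.mul t s) P = minn (eval t P) (eval s P).
Proof.
have [i Vi Ei] := eval_attained t P; have [j Vj Ej] := eval_attained s P.
rewrite Ei Ej; case: leqP => [le_ij | /ltnW le_ji].
  apply: eval_min => [|k]; rewrite Var_mul in_setU ?Vi // => /orP[Vk|Vk].
    by rewrite -Ei eval_le.
  by rewrite (leq_trans le_ij) // -Ej eval_le.
apply: eval_min => [|k]; rewrite Var_mul in_setU ?Vj ?orbT // => /orP[Vk|Vk].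
  by rewrite (leq_trans le_ji) // -Ei eval_le.
by rewrite -Ej eval_le.
Qed.

Lemma solution_var_ineq (i j : 'I_n) P :
  solution P (ineq (var i) (var j)) <-> P i <= P j.
Proof. by rewrite /solution /= eval_mul !eval_var; split=> /minn_idPl. Qed.

Lemma eval_homo t (P P0 : point n l) (m : nat -> nat) N :
    (forall i, P0 i < N) -> {in gtn N &, {homo m : a b / a <= b}} ->
    (forall i, P i = m (P0 i) :> nat) ->
  eval t P = m (eval t P0).
Proof.
move=> P0_lt m_homo PE; have [i Vi Ei] := eval_attained t P0.
rewrite Ei -PE; apply: eval_min => // j Vj.
by rewrite !PE m_homo ?inE // -Ei eval_le.
Qed.

Lemma solution_homo e (P P0 : point n l) (m : nat -> nat) N :
    (forall i, P0 i < N) -> {in gtn N &, {homo m : a b / a <= b}} ->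
    (forall i, P i = m (P0 i) :> nat) ->
  solution P0 e -> solution P e.
Proof.
by move=> P0_lt m_homo PE; rewrite /solution !(eval_homo _ P0_lt m_homo PE) => ->.
Qed.

End Evaluation.

Section GenericPoint.
Variables n l : nat.

Definition generic_point (Y : pset n l) (P0 : point n l) : Prop :=
  Y P0 /\ forall e P, Y P -> solution P0 e -> solution P e.

Lemma V_algebraic (S : equation n -> Prop) : algebraic (V (l := l) S).
Proof. by exists S. Qed.

Lemma generic_point_irreducible Y P0 :
  algebraic Y -> generic_point Y P0 -> irreducible Y.
Proof.
move=> Y_alg [Y_P0 P0_gen]; split=> // k Z Z_alg Y_cover.
have [i Zi_P0] := (Y_cover P0).1 Y_P0; exists i => P; split=> [Y_P|Zi_P].
  have [S ZiE] := Z_alg i; apply/ZiE => e Se.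
  by apply: P0_gen Y_P _; exact: (ZiE P0).1 Zi_P0 e Se.
by apply/Y_cover; exists i.
Qed.

Lemma generic_point_coord_iso Y P0 k :
    generic_point Y P0 -> (forall i, P0 i < k) ->
    (forall a : 'I_k, exists i, P0 i = a :> nat) ->
  coord_iso_L Y k.
Proof.
move=> [Y_P0 P0_gen] P0_lt P0_onto.
have eval_lt t : eval t P0 < k by have [i _ ->] := eval_attained t P0.
exists (fun t => Ordinal (eval_lt t)); split; [|split].
- move=> t s; split=> [/(congr1 val) /= E P Y_P | E].
    exact: (P0_gen (t, s)).
  exact/val_inj/E.
- move=> a; have [i P0i] := P0_onto a.
  by exists (var i); apply: val_inj; rewrite /= eval_var.
- by move=> t s; rewrite /= eval_mul.
Qed.

End GenericPoint.

Lemma homo_leq_chain_in N (f : nat -> nat) :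
  (forall k, k.+1 < N -> f k <= f k.+1) -> {in gtn N &, {homo f : a b / a <= b}}.
Proof.
move=> f_chain; apply: homo_leq_in => //.
- exact: leq_trans.
- by move=> i j _ jN k /andP[_ kj]; exact: ltn_trans kj jN.
- by move=> i _ iN; exact: f_chain.
Qed.

Section FirstKind.
Variables (n l : nat) (sg : {perm 'I_n.+1}).
Hypothesis lt_nl : n < l.

Lemma Y1P (P : point n.+1 l) :
  Y1 sg P <-> forall k, k < n -> P (sg (inord k)) <= P (sg (inord k.+1)).
Proof.
split=> [Y_P k lt_kn | chain e [i [j [ji ->]]]].
  apply/solution_var_ineq/Y_P; exists (inord k), (inord k.+1).
  by rewrite !inordK // ltnS ltnW.
have lt_in : i < n by rewrite -ltnS -ji.
by apply/solution_var_ineq; have := chain i lt_in; rewrite -ji !inord_val.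
Qed.

Definition Y1_point : point n.+1 l := [ffun x => widen_ord lt_nl ((sg^-1)%g x)].

Lemma Y1_pointE x : Y1_point x = (sg^-1)%g x :> nat.
Proof. by rewrite ffunE. Qed.

Lemma Y1_point_generic : generic_point (Y1 sg) Y1_point.
Proof.
split=> [|e P /Y1P chain].
  by apply/Y1P => k lt_kn; rewrite !Y1_pointE !permK !inordK // ltnS ltnW.
apply: (solution_homo (m := fun k => P (sg (inord k)) : nat) (N := n.+1)).
- by move=> x; rewrite Y1_pointE.
- exact: homo_leq_chain_in.
- by move=> x; rewrite Y1_pointE inord_val permKV.
Qed.

Lemma Y1_irreducible : irreducible (@Y1 n.+1 l sg).
Proof. apply: generic_point_irreducible Y1_point_generic. exact: V_algebraic. Qed.

Lemma Y1_coord_iso : coord_iso_L (@Y1 n.+1 l sg) n.+1.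
Proof.
apply: generic_point_coord_iso Y1_point_generic _ _ => [x | a].
  by rewrite Y1_pointE.
by exists (sg a); rewrite Y1_pointE permK.
Qed.

End FirstKind.

Section SecondKind.
Variables (n l : nat) (sg : {perm 'I_n.+2}).
Hypothesis lt_nl : n < l.

Lemma Y2P (P : point n.+2 l) :
  Y2 sg P <->
  P (sg ord0) = P (sg (inord 1)) :> nat /\
  forall k, k < n -> P (sg (inord k.+1)) <= P (sg (inord k.+2)).
Proof.
split=> [Y_P | [P_eq chain] e [[i [j [i0 [j1 ->]]]] | [i [j [i_gt0 [ji ->]]]]]].
- split=> [|k lt_kn].
    have := Y_P (var (sg ord0), var (sg (inord 1))); rewrite /solution !eval_var.
    by apply; left; exists ord0, (inord 1); rewrite inordK.
  apply/solution_var_ineq/Y_P; right; exists (inord k.+1), (inord k.+2).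
  by rewrite !inordK // ltnS ltnW.
- have -> : i = ord0 by exact: val_inj.
  have -> : j = inord 1 by apply: val_inj; rewrite /= inordK.
  by rewrite /solution !eval_var.
- have iE : i.-1.+1 = i := prednK i_gt0.
  have lt_in : i.-1 < n by rewrite -ltnS iE -ltnS -ji.
  by apply/solution_var_ineq; have := chain _ lt_in; rewrite iE -ji !inord_val.
Qed.

Lemma ltn_pred_ord (i : 'I_n.+2) : i.-1 < n.+1.
Proof. by case: i => [[|i]]. Qed.

Definition Y2_point : point n.+2 l :=
  [ffun x => widen_ord lt_nl (Ordinal (ltn_pred_ord ((sg^-1)%g x)))].

Lemma Y2_pointE x : Y2_point x = ((sg^-1)%g x).-1 :> nat.
Proof. by rewrite ffunE. Qed.

Lemma Y2_point_generic : generic_point (Y2 sg) Y2_point.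
Proof.
split=> [|e P /Y2P [P_eq chain]].
  apply/Y2P; split=> [|k lt_kn]; rewrite !Y2_pointE !permK.
    by rewrite inordK.
  by rewrite !inordK // ltnS ltnW.
apply: (solution_homo (m := fun k => P (sg (inord k.+1)) : nat) (N := n.+1)).
- by move=> x; rewrite Y2_pointE ltn_pred_ord.
- exact: homo_leq_chain_in.
- move=> x; rewrite Y2_pointE; case E: (nat_of_ord ((sg^-1)%g x)) => [|k] /=.
    suff -> : x = sg ord0 by [].
    by rewrite -(permKV sg x); congr (sg _); exact: val_inj.
  by rewrite -E inord_val permKV.
Qed.

Lemma Y2_irreducible : irreducible (@Y2 n.+2 l sg).
Proof. apply: generic_point_irreducible Y2_point_generic. exact: V_algebraic. Qed.

Lemma Y2_coord_iso : coord_iso_L (@Y2 n.+2 l sg) n.+1.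
Proof.
apply: generic_point_coord_iso Y2_point_generic _ _ => [x | a].
  by rewrite Y2_pointE ltn_pred_ord.
by exists (sg (inord a.+1)); rewrite Y2_pointE permK inordK // ltnS ltn_ord.
Qed.

End SecondKind.

Theorem lemma1 (n l : nat) (hn : 0 < n) (hnl : n <= l) (t s : term n)
  (hall : forall i : 'I_n, i \in Var t :|: Var s) (sg : {perm 'I_n}) :
  (first_kind t s sg ->
     irreducible (@Y1 n l sg) /\ coord_iso_L (@Y1 n l sg) n) /\
  (second_kind t s sg ->
     irreducible (@Y2 n l sg) /\ coord_iso_L (@Y2 n l sg) (n - 1)).
Proof.
case: n hn hnl t s hall sg => [//|n] _ lt_nl t s _ sg.
split=> [_ | [_ [j [_ [j1 _]]]]].
  exact: (conj (Y1_irreducible sg lt_nl) (Y1_coord_iso sg lt_nl)).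
clear t s; case: n lt_nl sg j j1 => [|n] lt_nl sg j j1.
  by have := ltn_ord j; rewrite j1.
have lt_nl' : n < l := ltnW lt_nl.
exact: (conj (Y2_irreducible sg lt_nl') (Y2_coord_iso sg lt_nl')).
Qed.
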